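(* Let $\bm A=(A_1,\dots,A_d)$ be Hermitian matrices in $M_n(\mathbb{C})$, $B\in M_n(\mathbb{C})$, and $(\bm\lambda,\nu)\in\mathbb{R}^d\times\mathbb{C}$. Suppose $(\bm\lambda,\nu)\in\dot\Lambda^{C}_{\epsilon_1}(\bm A,B)$ for some $\epsilon_1\ge0$, and that $$\sum_{i\neq k}\|[A_i,A_k]\|+\|F_{(\bm\lambda,\nu)}(\bm A,B)\|\le\epsilon_2$$ for some $\epsilon_2\ge0$. Then there is a unit vector $\bm\psi\in\mathbb{C}^n$ such that either $$\sqrt{\sum_{i=1}^d\|A_i\bm\psi-\lambda_i\bm\psi\|^2+\|B\bm\psi-\nu\bm\psi\|^2}\le\sqrt{2m}\,\sqrt{\epsilon_1^2+\epsilon_2}$$ or $$\sqrt{\sum_{i=1}^d\|A_i\bm\psi-\lambda_i\bm\psi\|^2+\|B^\dagger\bm\psi-\overline{\nu}\bm\psi\|^2}\le\sqrt{2m}\,\sqrt{\epsilon_1^2+\epsilon_2}.$$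
   Context: Let $n,d,m$ be positive integers. Fix Hermitian matrices $\Gamma_1,\dots,\Gamma_d\in M_{2m}(\mathbb{C})$ with $\Gamma_i^2=I_{2m}$ and $\Gamma_i\Gamma_j=-\Gamma_j\Gamma_i$ for $i\neq j$ (a Clifford representation; the paper uses a specific one built from Pauli matrices). Write $P=\begin{bmatrix} I_m&0\\0&0_m\end{bmatrix}$ and $Q=\begin{bmatrix}0_m&0\\0&I_m\end{bmatrix}$ in $M_{2m}(\mathbb{C})$. For a $d$-tuple $\bm A=(A_1,\dots,A_d)$ of Hermitian matrices in $M_n(\mathbb{C})$, a matrix $B\in M_n(\mathbb{C})$ (not necessarily Hermitian or normal), and a probe site $(\bm\lambda,\nu)\in\mathbb{R}^d\times\mathbb{C}$, the non-Hermitian spectral localizer is $$L_{(\bm\lambda,\nu)}(\bm A,B)=\sum_{i=1}^d (A_i-\lambda_i I)\otimes\Gamma_i+(B-\nu I)\otimes P-(B-\nu I)^\dagger\otimes Q\in M_{2mn}(\mathbb{C}).$$ The Clifford radial gap is $\dot\mu^{C}_{(\bm\lambda,\nu)}(\bm A,B)=\sigma_{\min}\big(L_{(\bm\lambda,\nu)}(\bm A,B)\big)$, and the Clifford radial $\epsilon$-pseudospectrum is $\dot\Lambda^{C}_\epsilon(\bm A,B)=\{(\bm\lambda,\nu)\in\mathbb{R}^d\times\mathbb{C}:\dot\mu^{C}_{(\bm\lambda,\nu)}(\bm A,B)\le\epsilon\}$. Define $$F_{(\bm\lambda,\nu)}(\bm A,B)=\sum_{i=1}^d\big(G_i+G_i^\dagger\big)-\sum_{i=1}^d\big(H_i+H_i^\dagger\big),\quad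 G_i=(A_i-\lambda_i I)(B-\nu I)\otimes\Gamma_iP,\quad H_i=(A_i-\lambda_i I)(B-\nu I)^\dagger\otimes\Gamma_iQ.$$ All matrix norms are operator norms; vector norms are Euclidean. *)

From HB Require Import structures.
From mathcomp Require Import all_boot all_order all_algebra.
From mathcomp Require Import boolp classical_sets reals.
From mathcomp Require Import complex mxtens.
Set Implicit Arguments. Unset Strict Implicit. Unset Printing Implicit Defensive.
Import Order.TTheory GRing.Theory Num.Theory.
Local Open Scope ring_scope.
Local Open Scope complex_scope.
Local Open Scope classical_set_scope.

Section Localizer.
Variable R : realType.
Local Notation C := R[i].

Definition adjmx {p q : nat} (A : 'M[C]_(p, q)) : 'M[C]_(q, p) :=
  \matrix_(i, j) ((A j i)^*)%C.

Definition is_hermitian {p : nat} (A : 'M[C]_p) : Prop := adjmx A = A.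

Definition vnorm {p : nat} (v : 'cV[C]_p) : R :=
  Num.sqrt (\sum_(i < p) (ComplexField.Normc.normc (v i 0)) ^+ 2).

Definition opnorm {p q : nat} (M : 'M[C]_(p, q)) : R :=
  sup [set vnorm (M *m v) | v in [set v : 'cV[C]_q | vnorm v = 1]].

Definition sigma_min {p : nat} (M : 'M[C]_p) : R :=
  inf [set vnorm (M *m v) | v in [set v : 'cV[C]_p | vnorm v = 1]].

(* Clifford representation of size 2m (written m + m) *)
Definition is_clifford {d m : nat} (Gamma : 'I_d -> 'M[C]_(m + m)) : Prop :=
  (forall i, is_hermitian (Gamma i)) /\
  (forall i, Gamma i *m Gamma i = 1%:M) /\
  (forall i j, i != j -> Gamma i *m Gamma j = - (Gamma j *m Gamma i)).

Definition Pmx (m : nat) : 'M[C]_(m + m) := block_mx 1%:M 0 0 0.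
Definition Qmx (m : nat) : 'M[C]_(m + m) := block_mx 0 0 0 1%:M.

Definition localizer {n d m : nat} (Gamma : 'I_d -> 'M[C]_(m + m))
  (A : 'I_d -> 'M[C]_n) (B : 'M[C]_n) (lam : 'I_d -> R) (nu : C)
  : 'M[C]_(n * (m + m)) :=
  \sum_(i < d) ((A i - (lam i)%:C%:M) *t Gamma i)
  + ((B - nu%:M) *t Pmx m) - (adjmx (B - nu%:M) *t Qmx m).

Definition clifford_radial_gap {n d m : nat} (Gamma : 'I_d -> 'M[C]_(m + m))
  (A : 'I_d -> 'M[C]_n) (B : 'M[C]_n) (lam : 'I_d -> R) (nu : C) : R :=
  sigma_min (localizer Gamma A B lam nu).

Definition in_clifford_pseudospectrum {n d m : nat} (Gamma : 'I_d -> 'M[C]_(m + m))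
  (eps : R) (A : 'I_d -> 'M[C]_n) (B : 'M[C]_n) (lam : 'I_d -> R) (nu : C) : Prop :=
  clifford_radial_gap Gamma A B lam nu <= eps.

Definition Fmx {n d m : nat} (Gamma : 'I_d -> 'M[C]_(m + m))
  (A : 'I_d -> 'M[C]_n) (B : 'M[C]_n) (lam : 'I_d -> R) (nu : C)
  : 'M[C]_(n * (m + m)) :=
  let G i := ((A i - (lam i)%:C%:M) *m (B - nu%:M)) *t (Gamma i *m Pmx m) in
  let H i := ((A i - (lam i)%:C%:M) *m adjmx (B - nu%:M)) *t (Gamma i *m Qmx m) in
  \sum_(i < d) (G i + adjmx (G i)) - \sum_(i < d) (H i + adjmx (H i)).

End Localizer.

(* Write [L = S + T] with [S = \sum_i (A_i - lam_i) *t Gamma_i] Hermitian and [T] the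
   non-Hermitian part. Then
     [L^* L = \sum_i (A_i - lam_i)^2 *t 1 + K + F
              + (B - nu)^* (B - nu) *t P + (B - nu) (B - nu)^* *t Q],
   where the Clifford relations turn [K] into [\sum_(i < k) [A_i, A_k] *t Gamma_i Gamma_k].
   Take a unit vector [v] with [|L v|^2 <= 2 eps1^2 + eps2], which exists because
   [sigma_min L <= eps1]. The [K] and [F] terms cost at most [eps2], so summed over the
   [2m] blocks [v_j] of [v] the joint residuals of [v_j] (for [A] and [B], or for [A] and
   [B^*] when [j >= m]) add up to at most [2 (eps1^2 + eps2)], while [\sum_j |v_j|^2 = 1].
   Hence some block has residual at most [2 (eps1^2 + eps2) |v_j|^2]; normalize it. *)

From HB Require Import structures.
From mathcomp Require Import all_boot all_order all_algebra.
From mathcomp Require Import boolp classical_sets reals.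
From mathcomp Require Import complex mxtens.
From mathcomp Require Import ring lra.
Set Implicit Arguments. Unset Strict Implicit. Unset Printing Implicit Defensive.
Import Order.TTheory GRing.Theory Num.Theory.
Local Open Scope ring_scope.
Local Open Scope complex_scope.

Section Adjoint.
Variable R : realType.
Local Notation C := R[i].

Lemma adjmxE p q (M : 'M[C]_(p, q)) : adjmx M = (map_mx conjc M)^T.
Proof. by apply/matrixP => i j; rewrite !mxE. Qed.

Lemma adjmxK p q (M : 'M[C]_(p, q)) : adjmx (adjmx M) = M.
Proof. by apply/matrixP => i j; rewrite !mxE conjcK. Qed.

Lemma adjmxM p q r (M : 'M[C]_(p, q)) (N : 'M[C]_(q, r)) :
  adjmx (M *m N) = adjmx N *m adjmx M.
Proof. by rewrite !adjmxE map_mxM trmx_mul. Qed.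

Lemma adjmx_is_zmod_morphism p q : zmod_morphism (@adjmx R p q).
Proof. by move=> M N; rewrite !adjmxE raddfB linearB. Qed.

HB.instance Definition _ p q := GRing.isZmodMorphism.Build 'M[C]_(p, q) 'M[C]_(q, p)
  (@adjmx R p q) (@adjmx_is_zmod_morphism p q).

Lemma adjmx_scalar p (c : C) : adjmx (c%:M : 'M[C]_p) = (conjc c)%:M.
Proof. by rewrite adjmxE map_scalar_mx tr_scalar_mx. Qed.

Lemma adjmx_tens p q r s (M : 'M[C]_(p, q)) (N : 'M[C]_(r, s)) :
  adjmx (M *t N) = adjmx M *t adjmx N.
Proof. by rewrite !adjmxE map_mxT trmx_tens. Qed.

Lemma adjmx_block p (M1 M2 M3 M4 : 'M[C]_p) :
  adjmx (block_mx M1 M2 M3 M4) = block_mx (adjmx M1) (adjmx M3) (adjmx M2) (adjmx M4).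
Proof. by rewrite !adjmxE map_block_mx tr_block_mx. Qed.

End Adjoint.

Section Norms.
Variable R : realType.
Local Notation C := R[i].
Local Notation normc := (@ComplexField.Normc.normc R).
Local Notation Re := (@complex.Re R).
Local Notation Im := (@complex.Im R).

Lemma sqr_normc (z : C) : normc z ^+ 2 = Re z ^+ 2 + Im z ^+ 2.
Proof. by case: z => a b /=; rewrite sqr_sqrtr // addr_ge0 // sqr_ge0. Qed.

Definition sqnorm {p} (v : 'cV[C]_p) : R := \sum_i normc (v i 0) ^+ 2.

Lemma vnormE p (v : 'cV[C]_p) : vnorm v = Num.sqrt (sqnorm v).
Proof. by []. Qed.

Lemma sqnorm_ge0 p (v : 'cV[C]_p) : 0 <= sqnorm v.
Proof. by apply: sumr_ge0 => i _; rewrite sqr_ge0. Qed.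

Lemma vnorm_ge0 p (v : 'cV[C]_p) : 0 <= vnorm v.
Proof. exact: sqrtr_ge0. Qed.

Lemma sqr_vnorm p (v : 'cV[C]_p) : vnorm v ^+ 2 = sqnorm v.
Proof. by rewrite sqr_sqrtr // sqnorm_ge0. Qed.

Lemma vnorm_le p (v : 'cV[C]_p) (b : R) : 0 <= b -> sqnorm v <= b ^+ 2 -> vnorm v <= b.
Proof. by move=> b0 vb; rewrite -(ger0_norm b0) -sqrtr_sqr ler_wsqrtr. Qed.

Lemma sqnorm_eq0 p (v : 'cV[C]_p) : sqnorm v = 0 -> v = 0.
Proof.
move=> /psumr_eq0P v0; apply/matrixP => i j; rewrite [j]ord1 mxE.
have /eqP := v0 (fun k _ => sqr_ge0 _) i isT.
by rewrite sqrf_eq0 => /eqP /ComplexField.Normc.eq0_normc.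
Qed.

Lemma sqnormZ p (c : C) (v : 'cV[C]_p) : sqnorm (c *: v) = normc c ^+ 2 * sqnorm v.
Proof.
rewrite /sqnorm mulr_sumr; apply: eq_bigr => i _.
by rewrite mxE ComplexField.Normc.normcM exprMn.
Qed.

Lemma sqr_normc_real (c : R) : normc c%:C ^+ 2 = c ^+ 2.
Proof. by rewrite sqr_normc /= expr0n /= addr0. Qed.

Lemma vnormZ p (c : R) (v : 'cV[C]_p) : 0 <= c -> vnorm (c%:C *: v) = c * vnorm v.
Proof.
move=> c0; rewrite !vnormE sqnormZ sqr_normc_real.
by rewrite sqrtrM ?sqr_ge0 // sqrtr_sqr ger0_norm.
Qed.

Lemma vnorm0 p : vnorm (0 : 'cV[C]_p) = 0.
Proof.
by rewrite vnormE /sqnorm big1 ?sqrtr0 // => i _; rewrite mxE ComplexField.Normc.normc0 expr0n.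
Qed.

Lemma vnorm_gt0 p (v : 'cV[C]_p) : v != 0 -> 0 < vnorm v.
Proof.
move=> v0; rewrite sqrtr_gt0 lt_def sqnorm_ge0 andbT.
by apply: contra v0 => /eqP /sqnorm_eq0 ->.
Qed.

Lemma vnorm_normalize p (v : 'cV[C]_p) : v != 0 -> vnorm ((vnorm v)^-1%:C *: v) = 1.
Proof.
move=> /vnorm_gt0 vpos.
by rewrite vnormZ ?invr_ge0 ?(ltW vpos) // mulVf ?gt_eqF.
Qed.

Lemma unit_vector_exists p : (0 < p)%N -> exists u : 'cV[C]_p, vnorm u = 1.
Proof.
move=> p0; exists (delta_mx (Ordinal p0) 0).
rewrite /vnorm (bigD1 (Ordinal p0)) //= big1 => [|i ip].
  by rewrite mxE !eqxx /= expr1n expr0n /= !addr0 sqrtr1 expr1n sqrtr1.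
by rewrite mxE (negPf ip) /= expr0n /= addr0 sqrtr0 expr0n.
Qed.

Lemma sqnormE p (v : 'cV[C]_p) : sqnorm v = Re ((adjmx v *m v) 0 0).
Proof.
rewrite mxE raddf_sum; apply: eq_bigr => i _; rewrite mxE sqr_normc.
by case: (v i 0) => a b /=; ring.
Qed.

Lemma sqnormDZ p (v w : 'cV[C]_p) (s : R) :
  sqnorm (v + s%:C *: w) = sqnorm v + 2 * s * Re ((adjmx v *m w) 0 0) + s ^+ 2 * sqnorm w.
Proof.
rewrite mxE raddf_sum !mulr_sumr -!big_split; apply: eq_bigr => i _ /=.
rewrite !mxE !sqr_normc.
by case: (v i 0) (w i 0) => [a b] [c e] /=; ring.
Qed.

Lemma Re_inner_ge p (v w : 'cV[C]_p) :
  vnorm v = 1 -> - vnorm w <= Re ((adjmx v *m w) 0 0).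
Proof.
move=> v1; have [->|/vnorm_gt0 tpos] := eqVneq w 0.
  by rewrite vnorm0 mulmx0 mxE oppr0.
(* Expand [0 <= |v + w / |w||^2]. *)
set r := Re _; set t := vnorm w in tpos *.
have := sqnorm_ge0 (v + t^-1%:C *: w).
rewrite sqnormDZ -sqr_vnorm v1 -sqr_vnorm -/t -/r expr1n => h.
have := mulr_ge0 (ltW tpos) h.
have -> : t * (1 + 2 * t^-1 * r + t^-1 ^+ 2 * t ^+ 2) = 2 * (t + r).
  by field; rewrite gt_eqF.
rewrite pmulr_rge0 //; lra.
Qed.

Lemma normc_ge0 (z : C) : 0 <= normc z.
Proof. by case: z => a b; apply: sqrtr_ge0. Qed.

Lemma normc_sum (I : finType) (F : I -> C) : normc (\sum_i F i) <= \sum_i normc (F i).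
Proof.
elim/big_ind2: _ => [|x1 y1 x2 y2 h1 h2|//].
- by rewrite ComplexField.Normc.normc0.
- exact: le_trans (le_normcD _ _) (lerD h1 h2).
Qed.

Lemma normc_entry_le_vnorm p (v : 'cV[C]_p) i : normc (v i 0) <= vnorm v.
Proof.
rewrite -[normc _]ger0_norm ?normc_ge0 // -sqrtr_sqr; apply: ler_wsqrtr.
by rewrite (bigD1 i) //= lerDl; apply: sumr_ge0 => j _; apply: sqr_ge0.
Qed.

Lemma sum_sqr_le_sqr_sum (I : finType) (F : I -> R) : (forall i, 0 <= F i) ->
  \sum_i F i ^+ 2 <= (\sum_i F i) ^+ 2.
Proof.
move=> F0; suff [] : 0 <= \sum_i F i /\ \sum_i F i ^+ 2 <= (\sum_i F i) ^+ 2 by [].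
elim/big_ind2: _ => [|x1 y1 x2 y2 [y1_ge0 h1] [y2_ge0 h2]|i _].
- by rewrite expr0n.
- by split; [exact: addr_ge0 | have := mulr_ge0 y1_ge0 y2_ge0; rewrite sqrrD; lra].
- by split.
Qed.

Definition entrywise_l1 {p q} (M : 'M[C]_(p, q)) : R := \sum_a \sum_b normc (M a b).

Lemma vnorm_mulmx_le_l1 p q (M : 'M[C]_(p, q)) v :
  vnorm (M *m v) <= entrywise_l1 M * vnorm v.
Proof.
have row_ge0 a : 0 <= (\sum_b normc (M a b)) * vnorm v.
  by rewrite mulr_ge0 ?vnorm_ge0 // sumr_ge0 // => b _; apply: normc_ge0.
have row_le a : normc ((M *m v) a 0) <= (\sum_b normc (M a b)) * vnorm v.
  rewrite mxE mulr_suml; apply: le_trans (normc_sum _) (ler_sum _ _) => b _.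
  by rewrite ComplexField.Normc.normcM ler_wpM2l ?normc_ge0 ?normc_entry_le_vnorm.
rewrite /entrywise_l1 mulr_suml; apply: vnorm_le; first exact: sumr_ge0.
apply: le_trans (sum_sqr_le_sqr_sum row_ge0); apply: ler_sum => a _.
by rewrite lerXn2r ?nnegrE ?normc_ge0.
Qed.

Lemma unit_sphere_image_neq0 p q (M : 'M[C]_(p, q)) : (0 < q)%N ->
  ([set vnorm (M *m v) | v in [set v : 'cV[C]_q | vnorm v = 1]] !=set0)%classic.
Proof. by case/unit_vector_exists => u u1; exists (vnorm (M *m u)), u. Qed.

Lemma opnorm_ub p q (M : 'M[C]_(p, q)) u : vnorm u = 1 -> vnorm (M *m u) <= opnorm M.
Proof.
move=> u1; apply: sup_upper_bound; last by exists u.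
split; first by exists (vnorm (M *m u)); exists u.
by exists (entrywise_l1 M) => _ [v v1 <-]; rewrite -[X in _ <= X]mulr1 -v1 vnorm_mulmx_le_l1.
Qed.

Lemma opnorm_ge0 p q (M : 'M[C]_(p, q)) : (0 < q)%N -> 0 <= opnorm M.
Proof. by case/unit_vector_exists => u /(opnorm_ub M); apply: le_trans (vnorm_ge0 _). Qed.

Lemma vnorm_mulmx_le p q (M : 'M[C]_(p, q)) v : vnorm (M *m v) <= opnorm M * vnorm v.
Proof.
have [->|v0] := eqVneq v 0; first by rewrite mulmx0 !vnorm0 mulr0.
have vpos := vnorm_gt0 v0.
have := opnorm_ub M (vnorm_normalize v0).
rewrite -scalemxAr vnormZ ?invr_ge0 ?(ltW vpos) // => h.
by rewrite -ler_pdivrMr // mulrC.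
Qed.

Lemma sigma_min_gt0 N (L : 'M[C]_N) : (0 < N)%N -> L \in unitmx -> 0 < sigma_min L.
Proof.
move=> N0 Lunit; set K := entrywise_l1 (invmx L).
have Kbound w : vnorm w = 1 -> 1 <= K * vnorm (L *m w).
  by move=> w1; rewrite -w1 -[w in vnorm w](mulKmx Lunit) vnorm_mulmx_le_l1.
have Kpos : 0 < K.
  have [u /Kbound] := unit_vector_exists N0; have := vnorm_ge0 (L *m u).
  by move=> Lu_ge0 Lu1; rewrite ltNge; apply/negP => K0; nra.
apply: lt_le_trans (_ : K^-1 <= _); first by rewrite invr_gt0.
apply: lb_le_inf; first exact: unit_sphere_image_neq0.
by move=> _ [w /Kbound w1 <-]; rewrite -[K^-1]mulr1 ler_pdivrMl.
Qed.

Lemma kernel_unit_vector N (L : 'M[C]_N) :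
  L \notin unitmx -> exists v, vnorm v = 1 /\ L *m v = 0.
Proof.
rewrite unitmxE unitfE negbK -det_tr => /det0P [r r0 rL].
have v0 : r^T != 0 by rewrite -(inj_eq (@trmx_inj _ _ _)) trmxK trmx0.
exists ((vnorm r^T)^-1%:C *: r^T); split; first exact: vnorm_normalize.
by rewrite -scalemxAr -[L]trmxK -trmx_mul rL trmx0 scaler0.
Qed.

(* [sigma_min L] is an infimum, so it is only approached within a margin; the margin
   [e1 ^+ 2 + e2] is absorbed by the constant [m + m >= 2] of the main theorem. *)
Lemma near_minimizing_unit_vector N (L : 'M[C]_N) (e1 e2 : R) :
  (0 < N)%N -> 0 <= e2 -> sigma_min L <= e1 ->
  exists v, vnorm v = 1 /\ sqnorm (L *m v) <= 2 * e1 ^+ 2 + e2.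
Proof.
move=> N0 e2_ge0 Le1.
have [Lunit|/kernel_unit_vector [v [v1 Lv0]]] := boolP (L \in unitmx); last first.
  by exists v; rewrite -sqr_vnorm Lv0 vnorm0 expr2 mul0r; split => //; nra.
have e1_gt0 := lt_le_trans (sigma_min_gt0 N0 Lunit) Le1.
have tau_ge0 : 0 <= 2 * e1 ^+ 2 + e2 by nra.
have : sigma_min L < Num.sqrt (2 * e1 ^+ 2 + e2).
  apply: le_lt_trans Le1 _; rewrite -[X in X < _]gtr0_norm // -sqrtr_sqr.
  by rewrite ltr_sqrt; nra.
case/(inf_lt (unit_sphere_image_neq0 L N0)) => _ [v v1 <-] Lv.
exists v; split => //; rewrite -sqr_vnorm -(sqr_sqrtr tau_ge0).
by rewrite ltW // ltrXn2r ?vnorm_ge0 ?sqrtr_ge0.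
Qed.

Lemma weighted_pigeonhole (I : finType) (a b : I -> R) (T : R) :
  (forall j, 0 <= a j) -> \sum_j a j = 1 -> \sum_j b j <= T ->
  (forall j, a j = 0 -> b j = 0) -> exists j, 0 < a j /\ b j <= T * a j.
Proof.
move=> a_ge0 a1 bT ab; apply: contrapT => /forallNP b_gt.
have aTb j : T * a j <= b j.
  have [aj0|aj_neq0] := eqVneq (a j) 0; first by rewrite aj0 ab // mulr0.
  rewrite leNgt; apply/negP => bj; apply: (b_gt j); split; last exact: ltW.
  by rewrite lt_def aj_neq0 a_ge0.
have [j0 aj0] : exists j, 0 < a j.
  apply: contrapT => /forallNP a_le0; move/eqP: a1; rewrite big1 ?(eq_sym 0) ?oner_eq0 // => j _.
  by apply/eqP; rewrite eq_le a_ge0 andbT leNgt; apply/negP; apply: a_le0.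
have : \sum_j T * a j < \sum_j b j.
  rewrite (bigD1 j0) //= [X in _ < X](bigD1 j0) //= ltr_leD ?ler_sum //.
  by rewrite ltNge; apply/negP => bj0; apply: (b_gt j0).
by rewrite -mulr_sumr a1 mulr1; lra.
Qed.

Lemma exists_unit_vector_le (I : finType) p (f : I -> 'cV[C]_p -> R)
    (w : I -> 'cV[C]_p) (T : R) :
  (forall j (c : R) u, f j (c%:C *: u) = c ^+ 2 * f j u) ->
  \sum_j sqnorm (w j) = 1 -> \sum_j f j (w j) <= T ->
  exists j psi, vnorm psi = 1 /\ f j psi <= T.
Proof.
move=> fZ w1 fT.
have f0 j : w j = 0 -> f j (w j) = 0.
  by move=> ->; have := fZ j 0 0; rewrite scaler0 => ->; rewrite expr2 !mul0r.
have [|j [wj_gt0 fj]] := weighted_pigeonhole (fun j => sqnorm_ge0 (w j)) w1 fT.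
  by move=> j /sqnorm_eq0; apply: f0.
have wj0 : w j != 0.
  by apply: contraTneq wj_gt0 => ->; rewrite -sqr_vnorm vnorm0 expr2 mul0r ltxx.
exists j, ((vnorm (w j))^-1%:C *: w j); split; first exact: vnorm_normalize.
by rewrite fZ exprVn sqr_vnorm -(ler_pM2l wj_gt0) mulrA mulfV ?gt_eqF // mul1r mulrC.
Qed.

End Norms.

Section Tensor.
Variable R : realType.
Local Notation C := R[i].
Local Notation normc := (@ComplexField.Normc.normc R).
Local Notation Re := (@complex.Re R).

Lemma big_mxtens_index (V : nmodType) p q (F : 'I_(p * q) -> V) :
  \sum_k F k = \sum_(a < p) \sum_(b < q) F (mxtens_index (a, b)).
Proof.
rewrite pair_big (reindex (@mxtens_index p q)) /=; first by apply: eq_bigr => -[].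
by exists (@mxtens_unindex p q) => k _; rewrite (mxtens_indexK, mxtens_unindexK).
Qed.

Definition mxtens_slice {p q} (v : 'cV[C]_(p * q)) (b : 'I_q) : 'cV[C]_p :=
  \col_a v (mxtens_index (a, b)) 0.

Lemma sqnorm_slices p q (v : 'cV[C]_(p * q)) : sqnorm v = \sum_b sqnorm (mxtens_slice v b).
Proof.
rewrite /sqnorm big_mxtens_index exchange_big; apply: eq_bigr => b _.
by apply: eq_bigr => a _; rewrite mxE.
Qed.

Lemma slice_mulmx_tens_diag p q (M : 'M[C]_p) (E : 'M[C]_q) (v : 'cV[C]_(p * q)) b :
  is_diag_mx E -> mxtens_slice ((M *t E) *m v) b = E b b *: (M *m mxtens_slice v b).
Proof.
move=> /is_diag_mxP Ediag; apply/matrixP => a k; rewrite [k]ord1 !mxE.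
rewrite big_mxtens_index mulr_sumr; apply: eq_bigr => c _; rewrite (bigD1 b) //= big1.
  by rewrite tensmxE !mxE addr0 mulrCA mulrA.
by move=> e eb; rewrite tensmxE Ediag ?mulr0 ?mul0r // eq_sym.
Qed.

Lemma sqnorm_mulmx_tens_diag p q (M : 'M[C]_p) (E : 'M[C]_q) (v : 'cV[C]_(p * q)) :
  is_diag_mx E ->
  sqnorm ((M *t E) *m v) = \sum_b normc (E b b) ^+ 2 * sqnorm (M *m mxtens_slice v b).
Proof.
move=> Ediag; rewrite sqnorm_slices; apply: eq_bigr => b _.
by rewrite slice_mulmx_tens_diag // sqnormZ.
Qed.

Lemma tensmxBl p q r s (M N : 'M[C]_(p, q)) (E : 'M[C]_(r, s)) :
  (M - N) *t E = M *t E - N *t E.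
Proof. by apply/matrixP => i j; rewrite !mxE mulrBl. Qed.

Lemma tensmxNr p q r s (M : 'M[C]_(p, q)) (E : 'M[C]_(r, s)) : M *t (- E) = - (M *t E).
Proof. by apply/matrixP => i j; rewrite !mxE mulrN. Qed.

Lemma tens1mx p q : (1%:M : 'M[C]_p) *t (1%:M : 'M[C]_q) = 1%:M.
Proof.
apply/matrixP => i j; case: (mxtens_indexP i) => a b; case: (mxtens_indexP j) => c e.
rewrite tensmxE !mxE (inj_eq (can_inj (@mxtens_indexK p q))) xpair_eqE.
by case: (a == c); case: (b == e); rewrite /= ?mulr1n ?mulr0n ?mulr1 ?mulr0.
Qed.

Lemma sqnorm_mulmx_unitary p (U : 'M[C]_p) v : adjmx U *m U = 1%:M ->
  sqnorm (U *m v) = sqnorm v.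
Proof. by move=> UU; rewrite !sqnormE adjmxM -mulmxA (mulmxA (adjmx U)) UU mul1mx. Qed.

Lemma vnorm_mulmx_tens_unitary p q (M : 'M[C]_p) (U : 'M[C]_q) (v : 'cV[C]_(p * q)) :
  (0 < p)%N -> adjmx U *m U = 1%:M -> vnorm ((M *t U) *m v) <= opnorm M * vnorm v.
Proof.
move=> p0 UU; have M_ge0 := opnorm_ge0 M p0.
have U_isometry : sqnorm ((1%:M *t U) *m v) = sqnorm v.
  by rewrite sqnorm_mulmx_unitary // adjmx_tens adjmx_scalar rmorph1 tensmx_mul mul1mx UU tens1mx.
rewrite tensmx_decr -mulmxA; apply: vnorm_le; first by rewrite mulr_ge0 ?vnorm_ge0.
rewrite exprMn sqr_vnorm -U_isometry (sqnorm_mulmx_tens_diag _ _ (scalar_mx_is_diag _ _)).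
rewrite sqnorm_slices mulr_sumr; apply: ler_sum => b _.
rewrite mxE eqxx mulr1n ComplexField.Normc.normc1 expr1n mul1r -!sqr_vnorm -exprMn.
by rewrite lerXn2r ?nnegrE ?mulr_ge0 ?vnorm_ge0 ?vnorm_mulmx_le.
Qed.

Definition rayleigh {p} (v : 'cV[C]_p) (M : 'M[C]_p) : R := Re ((adjmx v *m M *m v) 0 0).

Lemma rayleigh_is_zmod_morphism p (v : 'cV[C]_p) : zmod_morphism (rayleigh v).
Proof. by move=> M N; rewrite /rayleigh mulmxBr mulmxBl -raddfB !mxE. Qed.

HB.instance Definition _ p (v : 'cV[C]_p) := GRing.isZmodMorphism.Build 'M[C]_p R
  (rayleigh v) (rayleigh_is_zmod_morphism v).

Lemma rayleigh_adjmx_mul p q (N : 'M[C]_(q, p)) v : rayleigh v (adjmx N *m N) = sqnorm (N *m v).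
Proof. by rewrite /rayleigh sqnormE adjmxM !mulmxA. Qed.

Lemma rayleigh_ge p (M : 'M[C]_p) v : vnorm v = 1 -> - vnorm (M *m v) <= rayleigh v M.
Proof. by move=> v1; rewrite /rayleigh -mulmxA Re_inner_ge. Qed.

End Tensor.

Section Projections.
Variables (R : realType) (m : nat).

Lemma adjmx_Pmx : adjmx (Pmx R m) = Pmx R m.
Proof. by rewrite /Pmx adjmx_block adjmx_scalar rmorph1 !raddf0. Qed.

Lemma adjmx_Qmx : adjmx (Qmx R m) = Qmx R m.
Proof. by rewrite /Qmx adjmx_block adjmx_scalar rmorph1 !raddf0. Qed.

Lemma Pmx_is_diag : is_diag_mx (Pmx R m).
Proof. by rewrite /Pmx is_diag_block_mx // eqxx scalar_mx_is_diag mx0_is_diag. Qed.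

Lemma Qmx_is_diag : is_diag_mx (Qmx R m).
Proof. by rewrite /Qmx is_diag_block_mx // eqxx scalar_mx_is_diag mx0_is_diag. Qed.

Lemma Pmx_idem : Pmx R m *m Pmx R m = Pmx R m.
Proof. by rewrite /Pmx mulmx_block !mulmx0 !mul0mx !addr0 mulmx1. Qed.

Lemma Qmx_idem : Qmx R m *m Qmx R m = Qmx R m.
Proof. by rewrite /Qmx mulmx_block !mulmx0 !mul0mx !addr0 add0r mulmx1. Qed.

Lemma Pmx_Qmx : Pmx R m *m Qmx R m = 0.
Proof. by rewrite /Pmx /Qmx mulmx_block !mulmx0 !mul0mx !addr0 block_mx0. Qed.

Lemma Qmx_Pmx : Qmx R m *m Pmx R m = 0.
Proof. by rewrite /Pmx /Qmx mulmx_block !mulmx0 !mul0mx !addr0 block_mx0. Qed.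

Lemma Pmx_Qmx_diag j :
  (Pmx R m j j = 1 /\ Qmx R m j j = 0) \/ (Pmx R m j j = 0 /\ Qmx R m j j = 1).
Proof.
case: (split_ordP j) => a ->; [left|right];
by rewrite /Pmx /Qmx ?block_mxEul ?block_mxEdr !mxE eqxx.
Qed.

End Projections.

Section Localizer.
Variable R : realType.
Local Notation C := R[i].
Local Notation normc := (@ComplexField.Normc.normc R).

Lemma commutator_shift p (M N : 'M[C]_p) (a b : C) :
  (M - a%:M) *m (N - b%:M) - (N - b%:M) *m (M - a%:M) = M *m N - N *m M.
Proof.
rewrite !mulmxBl !mulmxBr !mul_mx_scalar !mul_scalar_mx.
apply/matrixP => i j; rewrite !mxE.
by case: (i == j); rewrite /= ?mulr1n ?mulr0n; ring.
Qed.

Lemma sum_offdiag_swap (V : nmodType) (I : finType) (f : I -> I -> V) :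
  \sum_i \sum_(k | i != k) f i k = \sum_i \sum_(k | i != k) f k i.
Proof.
rewrite (exchange_big_dep xpredT) //=; apply: eq_bigr => k _.
by apply: eq_bigl => i; rewrite eq_sym.
Qed.

Variables (n d m : nat) (Gamma : 'I_d -> 'M[C]_(m + m)) (A : 'I_d -> 'M[C]_n)
  (B : 'M[C]_n) (lam : 'I_d -> R) (nu : C).
Hypotheses (hGamma : is_clifford Gamma) (hA : forall k, is_hermitian (A k)).

Local Notation L := (localizer Gamma A B lam nu).
Local Notation F := (Fmx Gamma A B lam nu).
Local Notation P := (Pmx R m).
Local Notation Q := (Qmx R m).

Definition shiftA i := A i - (lam i)%:C%:M.
Definition shiftB := B - nu%:M.
Definition clifford_part := \sum_i (shiftA i *t Gamma i).
Definition nonhermitian_part := shiftB *t P - adjmx shiftB *t Q.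
Definition cross_terms :=
  \sum_i \sum_(k | i != k) ((shiftA i *m shiftA k) *t (Gamma i *m Gamma k)).

Lemma adjmx_Gamma i : adjmx (Gamma i) = Gamma i.
Proof. by case: hGamma => h _; apply: h. Qed.

Lemma Gamma_sqr i : Gamma i *m Gamma i = 1%:M.
Proof. by case: hGamma => _ [h _]; apply: h. Qed.

Lemma Gamma_anticomm i k : i != k -> Gamma i *m Gamma k = - (Gamma k *m Gamma i).
Proof. by case: hGamma => _ [_ h]; apply: h. Qed.

Lemma adjmx_shiftA i : adjmx (shiftA i) = shiftA i.
Proof. by rewrite /shiftA raddfB /= adjmx_scalar conjc_real hA. Qed.

Lemma adjmx_clifford_part : adjmx clifford_part = clifford_part.
Proof.
by rewrite raddf_sum; apply: eq_bigr => i _; rewrite /= adjmx_tens adjmx_shiftA adjmx_Gamma.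
Qed.

Lemma clifford_part_sqr : clifford_part *m clifford_part =
  \sum_i adjmx (shiftA i *t 1%:M) *m (shiftA i *t 1%:M) + cross_terms.
Proof.
rewrite mulmx_suml -big_split /=; apply: eq_bigr => i _.
rewrite mulmx_sumr (bigD1 i) //=; congr (_ + _).
  by rewrite adjmx_tens adjmx_scalar rmorph1 adjmx_shiftA !tensmx_mul Gamma_sqr mulmx1.
by apply: eq_big => [k|k _]; [rewrite eq_sym | rewrite tensmx_mul].
Qed.

Lemma clifford_nonhermitian_cross :
  clifford_part *m nonhermitian_part + adjmx nonhermitian_part *m clifford_part = F.
Proof.
have -> : adjmx nonhermitian_part *m clifford_part =
    adjmx (clifford_part *m nonhermitian_part) by rewrite adjmxM adjmx_clifford_part.
have -> : clifford_part *m nonhermitian_part = \sum_i ((shiftA i *m shiftB) *t (Gamma i *m P)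
    - (shiftA i *m adjmx shiftB) *t (Gamma i *m Q)).
  by rewrite mulmx_suml; apply: eq_bigr => i _; rewrite (mulmxBr (shiftA i *t Gamma i)) !tensmx_mul.
rewrite raddf_sum -big_split /Fmx -sumrB; apply: eq_bigr => i _ /=.
by rewrite [X in _ + X]raddfB /= opprD addrACA.
Qed.

Lemma nonhermitian_part_gram : adjmx nonhermitian_part *m nonhermitian_part =
  adjmx (shiftB *t P) *m (shiftB *t P) + adjmx (adjmx shiftB *t Q) *m (adjmx shiftB *t Q).
Proof.
rewrite /nonhermitian_part (raddfB (@adjmx R _ _)) /= !adjmx_tens adjmx_Pmx adjmx_Qmx adjmxK.
rewrite mulmxBl !mulmxBr !tensmx_mul.
by rewrite Pmx_idem Qmx_idem Pmx_Qmx Qmx_Pmx !tensmx0 subr0 sub0r opprK.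
Qed.

Lemma localizer_gram : adjmx L *m L =
  \sum_i adjmx (shiftA i *t 1%:M) *m (shiftA i *t 1%:M) + cross_terms + F
  + (adjmx (shiftB *t P) *m (shiftB *t P) + adjmx (adjmx shiftB *t Q) *m (adjmx shiftB *t Q)).
Proof.
have -> : L = clifford_part + nonhermitian_part by rewrite /localizer addrA.
rewrite (raddfD (@adjmx R _ _)) /= adjmx_clifford_part mulmxDl.
rewrite (mulmxDr clifford_part) (mulmxDr (adjmx nonhermitian_part)) clifford_part_sqr.
by rewrite -clifford_nonhermitian_cross -nonhermitian_part_gram !addrA.
Qed.

Lemma Gamma_mul_unitary i k : adjmx (Gamma i *m Gamma k) *m (Gamma i *m Gamma k) = 1%:M.
Proof. by rewrite adjmxM !adjmx_Gamma -mulmxA (mulmxA (Gamma i)) Gamma_sqr mul1mx Gamma_sqr. Qed.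

Lemma cross_terms_ge v : (0 < n)%N -> vnorm v = 1 ->
  - (\sum_i \sum_(k | i != k) opnorm (A i *m A k - A k *m A i)) <= 2 * rayleigh v cross_terms.
Proof.
move=> n0 v1.
(* Anticommutation of the [Gamma]s pairs the terms [(i, k)] and [(k, i)] into commutators. *)
have -> : 2 * rayleigh v cross_terms = \sum_i \sum_(k | i != k)
    rayleigh v ((shiftA i *m shiftA k - shiftA k *m shiftA i) *t (Gamma i *m Gamma k)).
  have rE : rayleigh v cross_terms = \sum_i \sum_(k | i != k)
      rayleigh v ((shiftA i *m shiftA k) *t (Gamma i *m Gamma k)).
    by rewrite raddf_sum; apply: eq_bigr => i _; rewrite raddf_sum.
  rewrite mulr_natl mulr2n {1}rE sum_offdiag_swap rE -big_split; apply: eq_bigr => i _.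
  rewrite -big_split; apply: eq_bigr => k ik /=.
  rewrite -(raddfD (rayleigh v)) (Gamma_anticomm (_ : k != i)) 1?eq_sym //.
  by rewrite tensmxNr addrC -tensmxBl.
rewrite -sumrN; apply: ler_sum => i _; rewrite -sumrN; apply: ler_sum => k _.
apply: le_trans (rayleigh_ge _ v1); rewrite lerN2.
apply: le_trans (vnorm_mulmx_tens_unitary _ _ n0 (Gamma_mul_unitary i k)) _.
by rewrite v1 mulr1 commutator_shift.
Qed.

(* Blocks [j < m] of a vector see [B - nu], the others its adjoint ([Pmx_Qmx_diag]). *)
Definition slice_residual (j : 'I_(m + m)) (w : 'cV[C]_n) : R :=
  \sum_i sqnorm (shiftA i *m w) + normc (P j j) ^+ 2 * sqnorm (shiftB *m w)
  + normc (Q j j) ^+ 2 * sqnorm (adjmx shiftB *m w).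

Lemma sqnorm_localizer v : sqnorm (L *m v) =
  \sum_j slice_residual j (mxtens_slice v j) + rayleigh v cross_terms + rayleigh v F.
Proof.
rewrite -rayleigh_adjmx_mul localizer_gram; move: F => F.
rewrite !(raddfD (rayleigh v)) raddf_sum /=.
rewrite !rayleigh_adjmx_mul !sqnorm_mulmx_tens_diag ?Pmx_is_diag ?Qmx_is_diag //.
under eq_bigr => i _ do
  rewrite rayleigh_adjmx_mul sqnorm_mulmx_tens_diag ?scalar_mx_is_diag //.
under eq_bigr => i _ do under eq_bigr => j _ do
  rewrite mxE eqxx mulr1n ComplexField.Normc.normc1 expr1n mul1r.
rewrite exchange_big /slice_residual !big_split /=; lra.
Qed.

Lemma sum_slice_residual_le v (eps : R) : (0 < n)%N -> vnorm v = 1 ->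
  \sum_i \sum_(k | i != k) opnorm (A i *m A k - A k *m A i) + opnorm F <= eps ->
  \sum_j slice_residual j (mxtens_slice v j) <= sqnorm (L *m v) + eps.
Proof.
move=> n0 v1 comm_le; have K_ge := cross_terms_ge n0 v1.
have F_ge : - opnorm F <= rayleigh v F.
  apply: le_trans (rayleigh_ge F v1); rewrite lerN2.
  by rewrite -[X in _ <= X]mulr1 -v1 vnorm_mulmx_le.
have comm_ge0 : 0 <= \sum_i \sum_(k | i != k) opnorm (A i *m A k - A k *m A i).
  by do 2 apply: sumr_ge0 => ? _; apply: opnorm_ge0.
rewrite sqnorm_localizer; lra.
Qed.

Lemma slice_residualZ j (c : R) w :
  slice_residual j (c%:C *: w) = c ^+ 2 * slice_residual j w.
Proof.
rewrite /slice_residual; under eq_bigr => i _ do rewrite -scalemxAr sqnormZ sqr_normc_real.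
by rewrite -mulr_sumr -!scalemxAr !sqnormZ sqr_normc_real; ring.
Qed.

Lemma slice_residual_cases j w :
  slice_residual j w = \sum_i vnorm (A i *m w - (lam i)%:C *: w) ^+ 2
                       + vnorm (B *m w - nu *: w) ^+ 2
  \/ slice_residual j w = \sum_i vnorm (A i *m w - (lam i)%:C *: w) ^+ 2
                          + vnorm (adjmx B *m w - conjc nu *: w) ^+ 2.
Proof.
have residualE : \sum_i vnorm (A i *m w - (lam i)%:C *: w) ^+ 2 = \sum_i sqnorm (shiftA i *m w).
  by apply: eq_bigr => i _; rewrite mulmxBl mul_scalar_mx sqr_vnorm.
have shiftBE : B *m w - nu *: w = shiftB *m w by rewrite mulmxBl mul_scalar_mx.
have adj_shiftBE : adjmx B *m w - conjc nu *: w = adjmx shiftB *m w.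
  by rewrite (raddfB (@adjmx R _ _)) /= adjmx_scalar mulmxBl mul_scalar_mx.
rewrite /slice_residual residualE shiftBE adj_shiftBE !sqr_vnorm.
case: (Pmx_Qmx_diag R j) => -[-> ->]; rewrite ComplexField.Normc.normc0 ComplexField.Normc.normc1.
- by left; rewrite expr1n expr0n /= mul1r mul0r addr0.
- by right; rewrite expr1n expr0n /= mul1r mul0r addr0.
Qed.

End Localizer.

Theorem mainTheorem2 (R : realType) (n d m : nat)
  (hn : (0 < n)%N) (hd : (0 < d)%N) (hm : (0 < m)%N)
  (Gamma : 'I_d -> 'M[R[i]]_(m + m)) (hGamma : is_clifford Gamma)
  (A : 'I_d -> 'M[R[i]]_n) (hA : forall k : 'I_d, is_hermitian (A k))
  (B : 'M[R[i]]_n) (lam : 'I_d -> R) (nu : R[i]) (eps1 eps2 : R)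
  (heps1 : 0 <= eps1) (heps2 : 0 <= eps2)
  (Hspec : in_clifford_pseudospectrum Gamma eps1 A B lam nu)
  (Hcomm : \sum_(i < d) \sum_(k < d | i != k) opnorm (A i *m A k - A k *m A i)
           + opnorm (Fmx Gamma A B lam nu) <= eps2) :
  exists psi : 'cV[R[i]]_n, vnorm psi = 1 /\
    (Num.sqrt (\sum_(i < d) vnorm (A i *m psi - (lam i)%:C *: psi) ^+ 2
               + vnorm (B *m psi - nu *: psi) ^+ 2)
       <= Num.sqrt ((m + m)%:R) * Num.sqrt (eps1 ^+ 2 + eps2)
     \/
     Num.sqrt (\sum_(i < d) vnorm (A i *m psi - (lam i)%:C *: psi) ^+ 2
               + vnorm (adjmx B *m psi - (nu^*)%C *: psi) ^+ 2)
       <= Num.sqrt ((m + m)%:R) * Num.sqrt (eps1 ^+ 2 + eps2)).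
Proof.
have N0 : (0 < n * (m + m))%N by rewrite muln_gt0 hn addn_gt0 hm.
have [v [v1 Lv]] := near_minimizing_unit_vector N0 heps2 Hspec.
have residual_le : \sum_(j < m + m) slice_residual A B lam nu j (mxtens_slice v j)
                   <= (m + m)%:R * (eps1 ^+ 2 + eps2).
  apply: le_trans (sum_slice_residual_le hGamma hA hn v1 Hcomm) _.
  have m2 : 2 <= (m + m)%:R :> R by rewrite (ler_nat R 2) (leq_add hm hm).
  have := sqr_ge0 eps1; nra.
have slices1 : \sum_j sqnorm (mxtens_slice v j) = 1.
  by rewrite -sqnorm_slices -sqr_vnorm v1 expr1n.
have [j [psi [psi1 psi_le]]] :=
  exists_unit_vector_le (slice_residualZ A B lam nu) slices1 residual_le.
exists psi; split => //.
have sqrt_le z : z <= (m + m)%:R * (eps1 ^+ 2 + eps2) ->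
    Num.sqrt z <= Num.sqrt (m + m)%:R * Num.sqrt (eps1 ^+ 2 + eps2).
  by move=> ?; rewrite -sqrtrM ?ler0n // ler_wsqrtr.
by case: (slice_residual_cases A B lam nu j psi) => <-; [left|right]; apply: sqrt_le.
Qed.
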